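(* Let $\bigl((A_n)_{n\in\mathbb{N}},(\alpha_{m,n})_{m\ge n}\bigr)$ be a direct system of C*-algebras. Suppose that for $n=2,3,\ldots$ we are given $\gamma_n\in\operatorname{Aut}(A_n)$. Suppose furthermore that for all $k,m\in\mathbb{N}$ with $m\ge k>1$ there is $\beta_m^{(k)}\in\operatorname{Aut}(A_m)$ such that: (1) for $m=2,3,\ldots$, $\beta_m^{(m)}=\gamma_m$; (2) for $m=2,3,\ldots$ and $k=2,3,\ldots,m-1$, $\beta_m^{(k)}\circ\alpha_{m,m-1}=\alpha_{m,m-1}\circ\beta_{m-1}^{(k)}$. Then $\varinjlim\bigl((A_n)_{n\in\mathbb{N}},(\alpha_{n+1,n})_{n\in\mathbb{N}}\bigr)\cong\varinjlim\bigl((A_n)_{n\in\mathbb{N}},(\gamma_{n+1}\circ\alpha_{n+1,n})_{n\in\mathbb{N}}\bigr).$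
   Context: Direct systems are indexed by $\mathbb{N}$; $\alpha_{n,m}=\alpha_{n,n-1}\circ\cdots\circ\alpha_{m+1,m}$ for $n\ge m$. *)

From HB Require Import structures.
From mathcomp Require Import all_boot all_order all_algebra.
From mathcomp Require Import reals complex.
Set Implicit Arguments. Unset Strict Implicit. Unset Printing Implicit Defensive.
Import Order.TTheory GRing.Theory Num.Theory.
Local Open Scope ring_scope.

Record cstar (R : realType) := CStar {
  cs_V :> lmodType R[i];
  cs_mul : cs_V -> cs_V -> cs_V;
  cs_star : cs_V -> cs_V;
  cs_norm : cs_V -> R;
  cs_mulA : forall x y z, cs_mul x (cs_mul y z) = cs_mul (cs_mul x y) z;
  cs_mulDl : forall x y z, cs_mul (x + y) z = cs_mul x z + cs_mul y z;
  cs_mulDr : forall x y z, cs_mul x (y + z) = cs_mul x y + cs_mul x z;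
  cs_mulZl : forall (c : R[i]) x y, cs_mul (c *: x) y = c *: cs_mul x y;
  cs_mulZr : forall (c : R[i]) x y, cs_mul x (c *: y) = c *: cs_mul x y;
  cs_starK : forall x, cs_star (cs_star x) = x;
  cs_starD : forall x y, cs_star (x + y) = cs_star x + cs_star y;
  cs_starZ : forall (c : R[i]) x, cs_star (c *: x) = (conjc c) *: cs_star x;
  cs_starM : forall x y, cs_star (cs_mul x y) = cs_mul (cs_star y) (cs_star x);
  cs_norm_eq0 : forall x, cs_norm x = 0 -> x = 0;
  cs_normD : forall x y, cs_norm (x + y) <= cs_norm x + cs_norm y;
  cs_normZ : forall (c : R[i]) x, cs_norm (c *: x) = Normc.normc c * cs_norm x;
  cs_normM : forall x y, cs_norm (cs_mul x y) <= cs_norm x * cs_norm y;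
  cs_cstar : forall x, cs_norm (cs_mul (cs_star x) x) = cs_norm x ^+ 2;
  cs_complete : forall u : nat -> cs_V,
    (forall e : R, 0 < e -> exists N, forall m n, (N <= m)%N -> (N <= n)%N ->
       cs_norm (u m - u n) < e) ->
    exists l, forall e : R, 0 < e -> exists N, forall n, (N <= n)%N ->
       cs_norm (u n - l) < e
}.

Definition is_starhom (R : realType) (A B : cstar R) (f : A -> B) : Prop :=
  [/\ forall x y, f (x + y) = f x + f y,
      forall (c : R[i]) x, f (c *: x) = c *: f x,
      forall x y, f (cs_mul x y) = cs_mul (f x) (f y)
    & forall x, f (cs_star x) = cs_star (f x)].

Definition is_stariso (R : realType) (A B : cstar R) (f : A -> B) : Prop :=
  is_starhom f /\ bijective f.

(* Indices are natural numbers starting at 1. *)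
Definition is_ind_limit (R : realType) (A : nat -> cstar R)
  (phi : forall n, A n -> A n.+1) (L : cstar R) (mu : forall n, A n -> L) : Prop :=
  (forall n, (1 <= n)%N -> is_starhom (mu n)) /\
  (forall n, (1 <= n)%N -> forall x, mu n.+1 (phi n x) = mu n x) /\
  (forall (B : cstar R) (nu : forall n, A n -> B),
     (forall n, (1 <= n)%N -> is_starhom (nu n)) ->
     (forall n, (1 <= n)%N -> forall x, nu n.+1 (phi n x) = nu n x) ->
     exists h : L -> B,
       [/\ is_starhom h,
           (forall n, (1 <= n)%N -> forall x, h (mu n x) = nu n x)
         & forall h' : L -> B, is_starhom h' ->
             (forall n, (1 <= n)%N -> forall x, h' (mu n x) = nu n x) ->
             forall y, h' y = h y]).

From HB Require Import structures.
From mathcomp Require Import all_boot all_order all_algebra.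
From mathcomp Require Import reals complex.
From Stdlib Require Import ClassicalEpsilon.
Local Open Scope ring_scope.

(* Proof idea: with delta_n := beta_n^(n) o ... o beta_n^(2), hypotheses (1)
   and (2) give delta_{n+1} o alpha_{n+1,n} = gamma_{n+1} o alpha_{n+1,n} o
   delta_n.  So the automorphisms delta_n form an isomorphism between the two
   direct systems, and isomorphic direct systems have isomorphic limits. *)

Section StarHom.
Context {R : realType}.

Lemma starhom_id {A : cstar R} : is_starhom (@id A).
Proof. by split. Qed.

Lemma starhom_comp {A B C : cstar R} {f : A -> B} {g : B -> C} :
  is_starhom f -> is_starhom g -> is_starhom (g \o f).
Proof.
case=> fD fZ fM fS [gD gZ gM gS]; split=> * /=.
- by rewrite fD gD.
- by rewrite fZ gZ.
- by rewrite fM gM.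
- by rewrite fS gS.
Qed.

Lemma starhom_can {A B : cstar R} {f : A -> B} {g : B -> A} :
  is_starhom f -> cancel f g -> cancel g f -> is_starhom g.
Proof.
case=> fD fZ fM fS fK gK; have fI := can_inj fK; split=> *; apply: fI.
- by rewrite fD !gK.
- by rewrite fZ !gK.
- by rewrite fM !gK.
- by rewrite fS !gK.
Qed.

Lemma stariso_id {A : cstar R} : is_stariso (@id A).
Proof. by split; [exact: starhom_id | exists id]. Qed.

Lemma stariso_comp {A B C : cstar R} {f : A -> B} {g : B -> C} :
  is_stariso f -> is_stariso g -> is_stariso (g \o f).
Proof.
case=> fH fB [gH gB]; split; first exact: starhom_comp.
exact: bij_comp.
Qed.

End StarHom.

Section IndLimit.
Context {R : realType}.

Lemma ind_limit_endo_id {A : nat -> cstar R} {phi : forall n, A n -> A n.+1}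
    {L : cstar R} {mu : forall n, A n -> L} {h : L -> L} :
  is_ind_limit phi mu -> is_starhom h ->
  (forall n, (1 <= n)%N -> forall x, h (mu n x) = mu n x) -> h =1 id.
Proof.
case=> muH [muC U] hH hE y.
have [k [_ _ kU]] := U L mu muH muC.
by rewrite (kU h hH hE) -(kU id (@starhom_id R L)).
Qed.

Lemma ind_limit_iso_can {A B : nat -> cstar R}
    {phi : forall n, A n -> A n.+1} {psi : forall n, B n -> B n.+1}
    {L1 L2 : cstar R} {mu1 : forall n, A n -> L1} {mu2 : forall n, B n -> L2}
    {delta : forall n, A n -> B n} {delta' : forall n, B n -> A n} :
  (forall n, is_starhom (delta n)) ->
  (forall n, cancel (delta n) (delta' n)) ->
  (forall n, cancel (delta' n) (delta n)) ->
  (forall n, (1 <= n)%N -> forall x, delta n.+1 (phi n x) = psi n (delta n x)) ->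
  is_ind_limit phi mu1 -> is_ind_limit psi mu2 -> exists f : L1 -> L2, is_stariso f.
Proof.
move=> dH dK dKV dC lim1 lim2.
have d'H n : is_starhom (delta' n) := starhom_can (dH n) (dK n) (dKV n).
have d'C n : (1 <= n)%N -> forall y,
    delta' n.+1 (psi n y) = phi n (delta' n y).
  by move=> n1 y; rewrite -{1}(dKV n y) -dC // dK.
case: (lim1) (lim2) => [mu1H [mu1C U1]] [mu2H [mu2C U2]].
have fC n : (1 <= n)%N -> forall x,
    (mu2 n.+1 \o delta n.+1) (phi n x) = (mu2 n \o delta n) x.
  by move=> n1 x; rewrite /= dC // mu2C.
have gC n : (1 <= n)%N -> forall y,
    (mu1 n.+1 \o delta' n.+1) (psi n y) = (mu1 n \o delta' n) y.
  by move=> n1 y; rewrite /= d'C // mu1C.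
have [f [fH fE _]] := U1 L2 _ (fun n n1 => starhom_comp (dH n) (mu2H n n1)) fC.
have [g [gH gE _]] := U2 L1 _ (fun n n1 => starhom_comp (d'H n) (mu1H n n1)) gC.
exists f; split=> //; exists g.
- apply: (ind_limit_endo_id lim1 (starhom_comp fH gH)) => n n1 x.
  by rewrite /= fE // gE // /= dK.
- apply: (ind_limit_endo_id lim2 (starhom_comp gH fH)) => n n1 y.
  by rewrite /= gE // fE // /= dKV.
Qed.

Lemma ind_limit_iso {A B : nat -> cstar R}
    {phi : forall n, A n -> A n.+1} {psi : forall n, B n -> B n.+1}
    {L1 L2 : cstar R} {mu1 : forall n, A n -> L1} {mu2 : forall n, B n -> L2}
    {delta : forall n, A n -> B n} :
  (forall n, is_stariso (delta n)) ->
  (forall n, (1 <= n)%N -> forall x, delta n.+1 (phi n x) = psi n (delta n x)) ->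
  is_ind_limit phi mu1 -> is_ind_limit psi mu2 -> exists f : L1 -> L2, is_stariso f.
Proof.
move=> dI; have inv n : {g | cancel (delta n) g /\ cancel g (delta n)}.
  by apply: constructive_indefinite_description; case: (dI n) => _ [g]; exists g.
apply: (ind_limit_iso_can (delta' := fun n => sval (inv n))) => // n.
- by case: (dI n).
- by case: (inv n) => ? [].
- by case: (inv n) => ? [].
Qed.

End IndLimit.

Section BetaChain.
Context {R : realType} {A : nat -> cstar R}.
Variable alpha : forall n, A n -> A n.+1.
Variable beta : forall m : nat, nat -> A m -> A m.

(* [beta_chain n j] is beta_n^(j+1) o ... o beta_n^(2). *)
Fixpoint beta_chain (n j : nat) : A n -> A n :=
  if j is j'.+1 then beta n j'.+2 \o beta_chain n j' else id.

Definition beta_full (n : nat) : A n -> A n := beta_chain n n.-1.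

Lemma stariso_beta_chain n j :
  (forall m k, (2 <= k)%N -> (k <= m)%N -> is_stariso (beta m k)) ->
  (j <= n.-1)%N -> is_stariso (beta_chain n j).
Proof.
move=> hbeta; elim: j => [|j IH] jn; first exact: stariso_id.
apply: stariso_comp; first exact/IH/ltnW.
by apply: hbeta => //; move: jn; case: (n).
Qed.

Lemma beta_chain_alpha n j (x : A n) :
  (forall m k, (2 <= k)%N -> (k <= m)%N -> forall x : A m,
     beta m.+1 k (alpha m x) = alpha m (beta m k x)) ->
  (j <= n.-1)%N -> beta_chain n.+1 j (alpha n x) = alpha n (beta_chain n j x).
Proof.
move=> h2; elim: j => [|j IH] jn //=.
by rewrite IH ?(ltnW jn) // h2 //; move: jn; case: (n).
Qed.

Lemma beta_full_alpha (gamma : forall n, A n -> A n) n (x : A n) :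
  (forall m, (2 <= m)%N -> forall x, beta m m x = gamma m x) ->
  (forall m k, (2 <= k)%N -> (k <= m)%N -> forall x : A m,
     beta m.+1 k (alpha m x) = alpha m (beta m k x)) ->
  (1 <= n)%N -> beta_full n.+1 (alpha n x) = gamma n.+1 (alpha n (beta_full n x)).
Proof.
move=> h1 h2; case: n x => // n x _.
by rewrite /beta_full /= h1 // beta_chain_alpha.
Qed.

End BetaChain.

Theorem lemma2p3 (R : realType) (A : nat -> cstar R)
  (alpha : forall n, A n -> A n.+1)
  (halpha : forall n, (1 <= n)%N -> is_starhom (alpha n))
  (gamma : forall n, A n -> A n)
  (hgamma : forall n, (2 <= n)%N -> is_stariso (gamma n))
  (beta : forall m : nat, nat -> A m -> A m)
  (hbeta : forall m k, (2 <= k)%N -> (k <= m)%N -> is_stariso (beta m k))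
  (h1 : forall m, (2 <= m)%N -> forall x, beta m m x = gamma m x)
  (h2 : forall m k, (2 <= k)%N -> (k <= m)%N -> forall x : A m,
          beta m.+1 k (alpha m x) = alpha m (beta m k x))
  (L1 L2 : cstar R) (mu1 : forall n, A n -> L1) (mu2 : forall n, A n -> L2) :
  @is_ind_limit R A alpha L1 mu1 ->
  @is_ind_limit R A (fun n x => gamma n.+1 (alpha n x)) L2 mu2 ->
  exists f : L1 -> L2, is_stariso f.
Proof.
apply: (ind_limit_iso (delta := beta_full beta)) => [n|n n1 x].
- exact: stariso_beta_chain.
- exact: beta_full_alpha.
Qed.
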